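(* Let $\sigma=(a_1,\ldots,a_s)$ be an $r$-good partition of $r$ and let $H=H(n,r,q\mid\sigma)$. Let $A,B$ be disjoint sets with $A\cup B=\{1,\ldots,s\}$ such that, with $a=\sum_{j\in A}a_j$ and $b=\sum_{j\in B}a_j$, one has $\gcd(a,b)=\gcd(a,r)=\gcd(b,r)=1$, and let $L=\mathrm{lcm}(a,b)$. Then: (1) If either ($r\mid q$ and $n\ge s$) or ($r\mid n$ and $q\ge (L-1)(r-1)$), then $H$ has a perfect matching, i.e. $\nu(H)=\frac{qn}{r}$. (2) If $q\ge L(r-1)$ and $n\ge s$, then $H$ has a matching leaving at most $L(r-1)^2$ vertices unmatched; that is, $\nu(H)\ge \frac{qn-L(r-1)^2}{r}$. (3) If $q\ge L(r^2-1)$, $s\ge 3$ and $n\ge s+r$, then $H$ has a matching leaving at most $(r-1)^2$ vertices unmatched; that is, $\nu(H)\ge\frac{qn-(r-1)^2}{r}$.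
   Context: A $\sigma$-hypergraph $H=H(n,r,q\mid\sigma)$, for a partition $\sigma=(a_1,\ldots,a_s)$ of $r$ with $s=s(\sigma)$ parts, is the $r$-uniform hypergraph whose vertex set is the disjoint union of $n$ classes $V_1,\ldots,V_n$, each of size $q$; an $r$-subset $K$ of vertices is an edge iff the multiset of non-zero values $|K\cap V_i|$ ($1\le i\le n$) equals $\sigma$. The partition $\sigma$ is $r$-good if there is a subsequence $\pi$ of $(a_1,\ldots,a_s)$ (a selection of some of the parts, by index) such that $\sum_{a_j\in\pi}a_j$ is coprime to $r$. A matching is a set of pairwise vertex-disjoint edges; it is perfect if it covers every vertex; $\nu(H)$ is the maximum size of a matching. *)

From mathcomp Require Import all_boot.
Set Implicit Arguments. Unset Strict Implicit. Unset Printing Implicit Defensive.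

(* Vertices of H(n,r,q|sigma): pairs (i, k) with i : 'I_n the class index and
   k : 'I_q the position inside class V_i. *)

Definition class_meet n q (K : {set 'I_n * 'I_q}) (i : 'I_n) : nat :=
  #|[set v in K | v.1 == i]|.

Definition is_edge n q (r : nat) (sigma : seq nat) (K : {set 'I_n * 'I_q}) : bool :=
  (#|K| == r) &&
  perm_eq [seq c <- [seq class_meet K i | i <- enum 'I_n] | c != 0] sigma.

Definition part_sum (sigma : seq nat) (S : {set 'I_(size sigma)}) : nat :=
  \sum_(j in S) nth 0 sigma j.

Definition r_good (r : nat) (sigma : seq nat) : bool :=
  [exists S : {set 'I_(size sigma)}, coprime (part_sum S) r].

Definition is_matching n q r sigma (M : {set {set 'I_n * 'I_q}}) : bool :=
  [forall K in M, is_edge r sigma K] &&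
  [forall K in M, forall K' in M, (K != K') ==> [disjoint K & K']].

Definition covered n q (M : {set {set 'I_n * 'I_q}}) : {set 'I_n * 'I_q} :=
  \bigcup_(K in M) K.

From mathcomp Require Import all_boot zify.
Set Implicit Arguments. Unset Strict Implicit. Unset Printing Implicit Defensive.

(* An injective placement f : 'I_s -> 'I_n (part j of sigma goes to class f j)
   is an edge type, and any list T of placements whose loads stay below q is
   realised by a matching: stack the edges of T one above the other inside
   every class.  Exactly \sum_i (q - load T i) vertices stay uncovered.
   The |X| rotations of all parts over a list X of classes load every class
   of X by r.  With a = part_sum A and b = part_sum (~: A), the ab rotations
   sending the A-parts cyclically onto a classes and the other parts onto b
   further classes load each of these r classes (a window) by ab.  Since
   gcd(ab, r) = 1, every q >= (ab - 1)(r - 1) is al * ab + be * r with al < r.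
   Then be rounds of full rotations plus al rounds of windows tiling the first
   r * (n %/ r) classes leave only n %% r classes short, by al * ab each;
   sliding the windows cyclically over all n classes instead leaves fewer than
   r classes short, by less than r each. *)

Lemma sum_ord_range q l h : \sum_(k < q) (l <= k < h) = minn h q - minn l q.
Proof.
elim: q => [|q IH]; first by rewrite big_ord0; lia.
by rewrite big_ord_recr /= IH; case: (leqP l q); case: (ltnP q h) => /=; lia.
Qed.

Lemma sum_ord_geq q l : \sum_(k < q) (l <= k) = q - l.
Proof.
rewrite (eq_bigr (fun k : 'I_q => (l <= k < q) : nat)) ?sum_ord_range; first by lia.
by move=> k _; rewrite ltn_ord andbT.
Qed.

Lemma sum_ord_ltn q h : \sum_(k < q) (k < h) = minn h q.
Proof.
by rewrite (eq_bigr (fun k : 'I_q => (0 <= k < h) : nat)) ?sum_ord_range //; lia.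
Qed.

Lemma sum_ord_eq m k : \sum_(u < m) (u == k :> nat) = (k < m).
Proof.
elim: m => [|m IH]; first by rewrite big_ord0.
by rewrite big_ord_recr /= IH; case: (ltngtP k m) => /=; lia.
Qed.

Lemma sum_window_mod m x k : k < m -> \sum_(u < m) ((x + u) %% m == k) = 1.
Proof.
case: m => [//|m] ltkm; elim: x => [|x IH].
  transitivity (\sum_(u < m.+1) (u == k :> nat)); last by rewrite sum_ord_eq ltkm.
  by apply: eq_bigr => u _; rewrite add0n modn_small.
rewrite -IH big_ord_recr [RHS]big_ord_recl /= addn0 addSnnS modnDr addnC.
by congr (_ + _); apply: eq_bigr => u _; rewrite addSnnS.
Qed.

Lemma sum_periods_mod m t c k : k < m -> \sum_(0 <= e < m * t) ((e + c) %% m == k) = t.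
Proof.
move=> ltkm; elim: t => [|t IH]; first by rewrite muln0 big_geq.
rewrite mulnS addnC (@big_cat_nat _ _ _ (m * t)) ?leq_addr //= IH.
rewrite -{1}[m * t]add0n big_addn addKn big_mkord -addn1; congr (_ + _).
rewrite -(sum_window_mod (m * t + c) ltkm); apply: eq_bigr => u _.
by congr (nat_of_bool (_ %% _ == _)); lia.
Qed.

Lemma sum_prefix_mod m t e i : 0 < m -> e <= m ->
  \sum_(0 <= k < m * t + e) (k %% m == i) = if i < m then t + (i < e) else 0.
Proof.
move=> m_gt0 lte; case: ifP => ltim; last first.
  by rewrite big1 // => k _; case: eqP => // eq_ki; rewrite -eq_ki ltn_pmod in ltim.
rewrite (@big_cat_nat _ _ _ (m * t)) ?leq_addr //=; congr (_ + _).
  by rewrite -[RHS](sum_periods_mod t 0 ltim); apply: eq_bigr => k _; rewrite addn0.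
rewrite -{1}[m * t]add0n big_addn addKn big_mkord -sum_ord_eq.
apply: eq_bigr => u _; rewrite addnC mulnC modnMDl modn_small //.
exact: leq_trans (ltn_ord u) lte.
Qed.

Lemma sum_blocks (F : nat -> nat) r G :
  \sum_(g < G) \sum_(u < r) F (g * r + u) = \sum_(0 <= k < r * G) F k.
Proof.
elim: G => [|G IH]; first by rewrite big_ord0 muln0 big_geq.
rewrite big_ord_recr /= IH mulnS [r + _]addnC [RHS](@big_cat_nat _ _ _ (r * G)) ?leq_addr //=.
congr (_ + _); rewrite -{1}[r * G]add0n big_addn addKn big_mkord.
by apply: eq_bigr => u _; congr F; lia.
Qed.

Lemma round_up_mul m d : 0 < d -> exists G e, e < d /\ d * G = m + e.
Proof.
move=> d_gt0; have := divn_eq m d; have := ltn_pmod m d_gt0.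
case: (posnP (m %% d)) => [m0 | m_gt0] lt_md Em.
  by exists (m %/ d), 0; split => //; rewrite addn0 {2}Em m0 addn0 mulnC.
exists (m %/ d).+1, (d - m %% d); split; first lia.
by rewrite {2}Em mulnS mulnC; lia.
Qed.

Lemma frobenius_representation L r q : 0 < r -> coprime L r ->
  (L - 1) * (r - 1) <= q -> exists al be, al < r /\ q = al * L + be * r.
Proof.
move=> r_gt0 coLr le_q; case: (posnP L) => [L0 | L_gt0].
  by move: coLr; rewrite L0 /coprime gcd0n => /eqP ->; exists 0, q; rewrite muln1.
have [u v Bezout _] := egcdnP r L_gt0; move: coLr; rewrite /coprime => /eqP g1.
(* al = q / L mod r, through the Bezout relation u * L = v * r + 1. *)
set al := (u * q) %% r; have lt_al : al < r by rewrite ltn_pmod.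
have al_mod : al * L = q %[mod r].
  rewrite modnMml -mulnA (mulnC q) mulnA Bezout g1 mulnDl mul1n.
  by rewrite -mulnA (mulnC r) mulnA modnMDl.
have le_alL : al * L <= q + (r - 1).
  have : (r - 1) * L = (L - 1) * (r - 1) + (r - 1).
    by rewrite mulnC -{1}(subnK L_gt0) mulnDl mul1n.
  have : al * L <= (r - 1) * L by apply: leq_mul => //; lia.
  lia.
have le_alq : al * L <= q.
  rewrite leqNgt; apply/negP => lt_q.
  have r_dvd : r %| al * L - q by rewrite -(eqn_mod_dvd r (ltnW lt_q)) al_mod.
  have := dvdn_leq (_ : 0 < al * L - q) r_dvd; rewrite subn_gt0 => /(_ lt_q); lia.
exists al, ((q - al * L) %/ r); split => //.
by rewrite divnK ?subnKC // -(eqn_mod_dvd r le_alq) al_mod.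
Qed.

Lemma card_pair_sum n q (P : 'I_n -> 'I_q -> bool) :
  #|[set v : 'I_n * 'I_q | P v.1 v.2]| = \sum_i \sum_(k < q) P i k.
Proof.
rewrite -sum1_card pair_big /= big_mkcond /=.
by apply: eq_bigr => [[i k]] _; rewrite inE /=; case: (P i k).
Qed.

Lemma count_enum_card (T : finType) (P : pred T) : count P (enum T) = #|P|.
Proof. by rewrite -sum1_count -sum1_card big_enum_cond. Qed.

Lemma size_filter_ord_geq n e : size [seq i : 'I_n <- enum 'I_n | e <= i] = n - e.
Proof.
rewrite size_filter count_enum_card -sum1_card big_mkcond /= -sum_ord_geq.
by apply: eq_bigr => i _; rewrite unfold_in; case: (e <= i).
Qed.

Lemma setC_card_leq0 (T : finType) (C : {set T}) : #|~: C| <= 0 -> C = setT.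
Proof. by rewrite leqn0 cards_eq0 -setCT => /eqP/setC_inj. Qed.

Lemma in_take_add_in_drop (T : eqType) (W : seq T) k x : uniq W ->
  (x \in take k W) + (x \in drop k W) = (x \in W).
Proof.
move=> W_uniq.
by rewrite -!count_uniq_mem ?take_uniq ?drop_uniq // -count_cat cat_take_drop.
Qed.

Lemma all_flatten_nseq (T : Type) (P : pred T) k s :
  all P s -> all P (flatten (nseq k s)).
Proof. by move=> Ps; elim: k => //= k IH; rewrite all_cat Ps. Qed.

Definition class_load (sigma : seq nat) n (f : {ffun 'I_(size sigma) -> 'I_n}) i :=
  \sum_(j | f j == i) nth 0 sigma j.

Definition load (sigma : seq nat) n (T : seq {ffun 'I_(size sigma) -> 'I_n}) i :=
  \sum_(f <- T) class_load f i.

Lemma load_cat (sigma : seq nat) n (T1 T2 : seq {ffun 'I_(size sigma) -> 'I_n}) i :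
  load (T1 ++ T2) i = load T1 i + load T2 i.
Proof. by rewrite /load big_cat. Qed.

Lemma load_flatten_nseq (sigma : seq nat) n k (T : seq {ffun 'I_(size sigma) -> 'I_n}) i :
  load (flatten (nseq k T)) i = k * load T i.
Proof. by elim: k => [|k IH]; rewrite ?/load ?big_nil //= -/(load _ i) load_cat IH mulSn. Qed.

Definition slab n q (l w : 'I_n -> nat) : {set 'I_n * 'I_q} :=
  [set v : 'I_n * 'I_q | l v.1 <= v.2 < l v.1 + w v.1].

Definition lower_part n q (l : 'I_n -> nat) : {set 'I_n * 'I_q} :=
  [set v : 'I_n * 'I_q | v.2 < l v.1].

Arguments slab {n} q l w.
Arguments lower_part {n} q l.

Section PartSums.
Variable sigma : seq nat.
Local Notation s := (size sigma).
Local Notation r := (sumn sigma).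
Hypothesis sigma_pos : all (fun x => 0 < x) sigma.

Lemma sum_parts : \sum_(j < s) nth 0 sigma j = r.
Proof. by rewrite sumnE (big_nth 0) big_mkord. Qed.

Lemma part_pos (j : 'I_s) : 0 < nth 0 sigma j.
Proof. exact/(allP sigma_pos)/mem_nth. Qed.

Lemma part_sum_setT : part_sum [set: 'I_s] = r.
Proof. by rewrite /part_sum -sum_parts; apply: eq_bigl => j; rewrite inE. Qed.

Lemma part_sum_setC (A : {set 'I_s}) : part_sum A + part_sum (~: A) = r.
Proof.
rewrite -sum_parts (bigID (mem A)) /=; congr (_ + _).
by apply: eq_bigl => j; rewrite inE.
Qed.

Lemma card_le_part_sum (A : {set 'I_s}) : #|A| <= part_sum A.
Proof. by rewrite -sum1_card; apply: leq_sum => j _; apply: part_pos. Qed.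

Lemma part_sum_le_sumn (A : {set 'I_s}) : part_sum A <= r.
Proof. by rewrite -(part_sum_setC A) leq_addr. Qed.

Lemma size_le_sumn : s <= r.
Proof. by rewrite -part_sum_setT -[X in X <= _]card_ord -cardsT card_le_part_sum. Qed.
End PartSums.

Section Realization.
Variables (sigma : seq nat) (n q : nat).
Local Notation s := (size sigma).
Local Notation r := (sumn sigma).
Local Notation placement := {ffun 'I_s -> 'I_n}.
Hypothesis sigma_pos : all (fun x => 0 < x) sigma.

Lemma class_load_image (f : placement) j : injective f -> class_load f (f j) = nth 0 sigma j.
Proof.
by move=> f_inj; rewrite /class_load (big_pred1 j) // => j'; apply/eqP/eqP => [/f_inj|->].
Qed.

Lemma class_load_eq0 (f : placement) i : (forall j, f j != i) -> class_load f i = 0.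
Proof. by move=> f_i; rewrite /class_load big_pred0 // => j; rewrite (negbTE (f_i j)). Qed.

Lemma sum_class_load (f : placement) : \sum_i class_load f i = r.
Proof. by rewrite -sum_parts /class_load (partition_big f predT). Qed.

Lemma perm_class_loads (f : placement) : injective f ->
  perm_eq [seq c <- [seq class_load f i | i <- enum 'I_n] | c != 0] sigma.
Proof.
move=> f_inj; apply/permP => p; rewrite count_filter count_map.
have -> : count p sigma = #|[pred j : 'I_s | p (nth 0 sigma j)]|.
  rewrite -count_enum_card -{1}[sigma](mkseq_nth 0) /mkseq -val_enum_ord -map_comp.
  by rewrite count_map.
rewrite count_enum_card -(card_imset _ f_inj); apply: eq_card => i; rewrite !inE /=.
apply/idP/imsetP => [/andP[p_i nz_i] | [j]].
  have [j /eqP fj] : exists j, f j == i.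
    by apply/existsP; apply: contraR nz_i => /existsPn/class_load_eq0 ->.
  by exists j; rewrite // inE /= -(class_load_image j f_inj) fj.
by rewrite inE /= => p_j ->; rewrite class_load_image // p_j -lt0n part_pos.
Qed.

Lemma class_meet_slab (l w : 'I_n -> nat) i : l i + w i <= q -> class_meet (slab q l w) i = w i.
Proof.
move=> le_q; rewrite /class_meet.
have -> : [set v in slab q l w | v.1 == i] =
    [set v : 'I_n * 'I_q | (v.1 == i) && (l v.1 <= v.2 < l v.1 + w v.1)].
  by apply/setP => v; rewrite !inE andbC.
rewrite (card_pair_sum (fun i' k => (i' == i) && (l i' <= k < l i' + w i'))).
rewrite (bigD1 i) //= [X in _ + X]big1 => [|i' ne_i]; last first.
  by apply: big1 => k _; rewrite (negbTE ne_i).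
by rewrite addn0 eqxx sum_ord_range; lia.
Qed.

Lemma card_slab (l w : 'I_n -> nat) : (forall i, l i + w i <= q) -> #|slab q l w| = \sum_i w i.
Proof.
move=> le_q; rewrite (card_pair_sum (fun i k => l i <= k < l i + w i)).
by apply: eq_bigr => i _; rewrite sum_ord_range; have := le_q i; lia.
Qed.

Lemma slab_is_edge (l : 'I_n -> nat) (f : placement) : injective f ->
  (forall i, l i + class_load f i <= q) -> is_edge r sigma (slab q l (class_load f)).
Proof.
move=> f_inj le_q; rewrite /is_edge card_slab // sum_class_load eqxx /=.
by rewrite (eq_map (fun i => class_meet_slab (le_q i))) perm_class_loads.
Qed.

Lemma covered_setU1 (K : {set 'I_n * 'I_q}) M : covered (K |: M) = K :|: covered M.
Proof. by rewrite /covered bigcup_setU big_set1. Qed.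

Lemma is_matching_setU1 K (M : {set {set 'I_n * 'I_q}}) :
  is_matching r sigma M -> is_edge r sigma K -> [disjoint K & covered M] ->
  is_matching r sigma (K |: M).
Proof.
case/andP=> /forall_inP M_edges /forall_inP M_disj K_edge K_disj.
have disj_K K' : K' \in M -> [disjoint K & K'].
  by move=> K'M; apply: disjointWr K_disj; apply: bigcup_sup.
apply/andP; split; apply/forall_inP => K1; first by case/setU1P => [-> | /M_edges].
case/setU1P => [-> | K1M]; apply/forall_inP => K2; case/setU1P => [-> | K2M];
  apply/implyP => ne12.
- by rewrite eqxx in ne12.
- exact: disj_K.
- by rewrite disjoint_sym disj_K.
- by have /forall_inP/(_ K2 K2M)/implyP := M_disj K1 K1M; apply.
Qed.

Lemma matching_of_loads (T : seq placement) :
  all (fun f : placement => injectiveb f) T -> (forall i, load T i <= q) ->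
  exists M : {set {set 'I_n * 'I_q}},
    is_matching r sigma M /\ covered M = lower_part q (load T).
Proof.
elim: T => [_ _ | f T IH /= /andP[/injectiveP f_inj T_inj] le_q].
  exists set0; split; first by apply/andP; split; apply/forall_inP => K; rewrite inE.
  by apply/setP => v; rewrite /covered big_set0 !inE /load big_nil.
have loadE i : load (f :: T) i = class_load f i + load T i by rewrite /load big_cons.
have [M [M_match M_cov]] : exists M, is_matching r sigma M /\ covered M = lower_part q (load T).
  by apply: IH => // i; have := le_q i; rewrite loadE; lia.
set K := slab q (load T) (class_load f).
have K_edge : is_edge r sigma K by apply: slab_is_edge => // i; rewrite addnC -loadE.
have K_disj : [disjoint K & covered M].
  by rewrite M_cov -setI_eq0; apply/eqP/setP => v; rewrite !inE; lia.
exists (K |: M); split; first exact: is_matching_setU1.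
by rewrite covered_setU1 M_cov; apply/setP => v; rewrite !inE loadE; lia.
Qed.

Lemma card_setC_lower_part (l : 'I_n -> nat) : #|~: lower_part q l| = \sum_i (q - l i).
Proof.
have -> : ~: lower_part q l = [set v : 'I_n * 'I_q | l v.1 <= v.2].
  by apply/setP => v; rewrite !inE -leqNgt.
rewrite (card_pair_sum (fun i k => l i <= k)); apply: eq_bigr => i _.
exact: sum_ord_geq.
Qed.

Lemma matching_of_deficiency (T : seq placement) d :
  all (fun f : placement => injectiveb f) T -> (forall i, load T i <= q) ->
  \sum_i (q - load T i) <= d ->
  exists M : {set {set 'I_n * 'I_q}}, is_matching r sigma M /\ #|~: covered M| <= d.
Proof.
move=> T_inj le_q le_d; have [M [M_match M_cov]] := matching_of_loads T_inj le_q.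
by exists M; rewrite M_cov card_setC_lower_part.
Qed.

Lemma perfect_matching_of_loads (T : seq placement) :
  all (fun f : placement => injectiveb f) T -> (forall i, load T i = q) ->
  exists M : {set {set 'I_n * 'I_q}}, is_matching r sigma M /\ covered M = setT.
Proof.
move=> T_inj loadT.
have def0 : \sum_i (q - load T i) <= 0 by rewrite big1 // => i _; rewrite loadT subnn.
have [M [M_match M_def]] := matching_of_deficiency T_inj (fun i => eq_leq (loadT i)) def0.
by exists M; split => //; apply: setC_card_leq0.
Qed.
End Realization.

Section Rotations.
Variables (sigma : seq nat) (n : nat) (i0 : 'I_n).
Local Notation s := (size sigma).
Local Notation placement := {ffun 'I_s -> 'I_n}.
Implicit Types (J : {set 'I_s}) (X Y : seq 'I_n).

Definition rotation (J : {set 'I_s}) (X : seq 'I_n) e (j : 'I_s) : 'I_n :=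
  nth i0 X ((e + index j (enum J)) %% size X).

Definition split_rotation (J : {set 'I_s}) (X Y : seq 'I_n) e : placement :=
  [ffun j => if j \in J then rotation J X e j else rotation (~: J) Y e j].

Definition split_rotations J X Y E := [seq split_rotation J X Y e | e <- iota 0 E].

Lemma index_enum_lt J j : j \in J -> index j (enum J) < #|J|.
Proof. by move=> jJ; rewrite cardE index_mem mem_enum. Qed.

Lemma size_gt0_of_card J X j : j \in J -> #|J| <= size X -> 0 < size X.
Proof. by move=> jJ; apply: leq_trans; rewrite card_gt0; apply/set0Pn; exists j. Qed.

Lemma rotation_mem J X e j : j \in J -> #|J| <= size X -> rotation J X e j \in X.
Proof. by move=> jJ le_JX; rewrite mem_nth // ltn_pmod // (size_gt0_of_card jJ). Qed.

Lemma rotation_inj J X e :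
  uniq X -> #|J| <= size X -> {in J &, injective (rotation J X e)}.
Proof.
move=> X_uniq le_JX j j' jJ j'J; have X_gt0 := size_gt0_of_card jJ le_JX.
have := index_enum_lt jJ; have := index_enum_lt j'J.
move=> lt_j' lt_j /eqP; rewrite nth_uniq ?ltn_pmod // !(addnC e) eqn_modDr.
rewrite !modn_small ?(leq_trans _ le_JX) //.
by move/eqP/(congr1 (nth j (enum J))); rewrite !nth_index ?mem_enum.
Qed.

Lemma split_rotation_inj J X Y e : uniq X -> uniq Y ->
  #|J| <= size X -> #|~: J| <= size Y -> J = setT \/ [disjoint X & Y] ->
  injective (split_rotation J X Y e).
Proof.
move=> X_uniq Y_uniq le_JX le_JY XY_disj j j'; rewrite !ffunE.
have cross k k' : k \in J -> k' \notin J -> rotation J X e k != rotation (~: J) Y e k'.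
  move=> kJ k'J; case: XY_disj => [J_T | XY_disj]; first by rewrite J_T inE in k'J.
  have k'J' : k' \in ~: J by rewrite inE.
  apply: contraTneq (rotation_mem e k'J' le_JY) => <-.
  by rewrite (disjointFr XY_disj) ?rotation_mem.
case: ifP => jJ; case: ifP => j'J.
- exact: rotation_inj.
- by move/eqP; rewrite (negbTE (cross _ _ jJ (negbT j'J))).
- by move/eqP; rewrite eq_sym (negbTE (cross _ _ j'J (negbT jJ))).
- by apply: rotation_inj; rewrite ?inE ?jJ ?j'J.
Qed.

Lemma count_rotations X E c i : uniq X -> 0 < size X -> size X %| E ->
  \sum_(e <- iota 0 E) (nth i0 X ((e + c) %% size X) == i) = (i \in X) * (E %/ size X).
Proof.
move=> X_uniq X_gt0 X_dvdE; case iX: (i \in X); last first.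
  rewrite mul0n big1 // => e _; apply/eqP; rewrite eqb0; apply: contraFN iX => /eqP <-.
  by rewrite mem_nth // ltn_pmod.
have ltiX : index i X < size X by rewrite index_mem.
rewrite mul1n -[in RHS](sum_periods_mod (E %/ size X) c ltiX).
have -> : iota 0 E = index_iota 0 (size X * (E %/ size X)).
  by rewrite /index_iota subn0 mulnC divnK.
apply: eq_bigr => e _.
by rewrite -{1}(nth_index i0 iX) nth_uniq ?index_mem ?ltn_pmod.
Qed.

Lemma sum_rotation_load J X E i :
  uniq X -> #|J| <= size X -> size X %| E ->
  \sum_(e <- iota 0 E) \sum_(j in J) (rotation J X e j == i) * nth 0 sigma j
   = (i \in X) * (E %/ size X * part_sum J).
Proof.
move=> X_uniq le_JX X_dvdE; case: (set_0Vmem J) => [-> | [j jJ]].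
  by rewrite /part_sum !big_set0 !muln0 big1 // => e _; rewrite big_set0.
rewrite exchange_big /part_sum !big_distrr; apply: eq_bigr => j' _.
rewrite -big_distrl /= count_rotations ?mulnA //.
exact: size_gt0_of_card jJ le_JX.
Qed.

Lemma load_split_rotations J X Y E i : uniq X -> uniq Y ->
  #|J| <= size X -> #|~: J| <= size Y -> size X %| E -> size Y %| E ->
  load (split_rotations J X Y E) i =
  (i \in X) * (E %/ size X * part_sum J) + (i \in Y) * (E %/ size Y * part_sum (~: J)).
Proof.
move=> X_uniq Y_uniq le_JX le_JY X_dvdE Y_dvdE.
rewrite -!sum_rotation_load // -big_split /load big_map; apply: eq_bigr => e _ /=.
rewrite /class_load big_mkcond (bigID (mem J)) /=; congr (_ + _).
  by apply: eq_bigr => j jJ; rewrite ffunE jJ; case: (_ == i); rewrite ?mul1n.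
apply: eq_big => [j | j]; first by rewrite inE.
by move=> jJ; rewrite ffunE (negbTE jJ); case: (_ == i); rewrite ?mul1n.
Qed.
End Rotations.

Section Families.
Variables (sigma : seq nat) (n : nat) (i0 : 'I_n).
Local Notation s := (size sigma).
Local Notation r := (sumn sigma).
Local Notation placement := {ffun 'I_s -> 'I_n}.
Hypothesis sigma_pos : all (fun x => 0 < x) sigma.

Definition full_rotations (X : seq 'I_n) := split_rotations i0 [set: 'I_s] X X (size X).

Lemma full_rotations_inj X : uniq X -> s <= size X ->
  all (fun f : placement => injectiveb f) (full_rotations X).
Proof.
move=> X_uniq le_sX; apply/allP => f /mapP[e _ ->]; apply/injectiveP.
by apply: split_rotation_inj; rewrite ?cardsT ?card_ord ?setCT ?cards0; auto.
Qed.

Lemma load_full_rotations X i : uniq X -> s <= size X ->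
  load (full_rotations X) i = (i \in X) * r.
Proof.
move=> X_uniq le_sX.
rewrite load_split_rotations ?cardsT ?card_ord ?setCT ?cards0 //.
rewrite part_sum_setT /part_sum big_set0 !muln0 addn0.
by case: X X_uniq le_sX => [|x X] //= _ _; rewrite divnn mul1n.
Qed.

Lemma load_full_rotations_enum i : s <= n -> load (full_rotations (enum 'I_n)) i = r.
Proof.
by move=> le_sn; rewrite load_full_rotations ?enum_uniq ?size_enum_ord // mem_enum mul1n.
Qed.

Lemma full_rotations_enum_inj : s <= n ->
  all (fun f : placement => injectiveb f) (full_rotations (enum 'I_n)).
Proof. by move=> le_sn; rewrite full_rotations_inj ?enum_uniq ?size_enum_ord. Qed.

Definition class_mod N k : 'I_n := insubd i0 (k %% N).

Definition window N g := [seq class_mod N (g * r + u) | u <- iota 0 r].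

Definition window_rotations (A : {set 'I_s}) N g :=
  split_rotations i0 A (take (part_sum A) (window N g)) (drop (part_sum A) (window N g))
    (part_sum A * part_sum (~: A)).

Definition sliding_windows A N G := flatten [seq window_rotations A N g | g <- iota 0 G].

Variables (A : {set 'I_s}) (N : nat).
Hypotheses (N_gt0 : 0 < N) (le_Nn : N <= n) (le_rN : r <= N).
Local Notation a := (part_sum A).
Local Notation b := (part_sum (~: A)).

Lemma val_class_mod k : val (class_mod N k) = k %% N.
Proof. by rewrite val_insubd (leq_trans (ltn_pmod k N_gt0) le_Nn). Qed.

Lemma size_window g : size (window N g) = r.
Proof. by rewrite size_map size_iota. Qed.

Lemma window_uniq g : uniq (window N g).
Proof.
rewrite map_inj_in_uniq ?iota_uniq // => u u'; rewrite !mem_iota !add0n => lt_ur lt_u'r.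
move/(congr1 val); rewrite !val_class_mod => /eqP.
by rewrite eqn_modDl !modn_small => [/eqP | |]; lia.
Qed.

Lemma mem_window g i : (i \in window N g) = \sum_(u < r) ((g * r + u) %% N == i) :> nat.
Proof.
rewrite -count_uniq_mem ?window_uniq // count_map -sumn_count sumnE big_map.
have -> : iota 0 r = index_iota 0 r by rewrite /index_iota subn0.
rewrite big_mkord.
by apply: eq_bigr => u _ /=; rewrite -val_eqE val_class_mod.
Qed.

Lemma size_take_window g : size (take a (window N g)) = a.
Proof. by rewrite size_takel // size_window part_sum_le_sumn. Qed.

Lemma size_drop_window g : size (drop a (window N g)) = b.
Proof. by rewrite size_drop size_window -(part_sum_setC A) addKn. Qed.

Lemma window_rotations_inj g : all (fun f : placement => injectiveb f) (window_rotations A N g).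
Proof.
have := window_uniq g; rewrite -(cat_take_drop a (window N g)) cat_uniq.
case/and3P => tk_uniq tk_dr dr_uniq.
apply/allP => f /mapP[e _ ->]; apply/injectiveP; apply: split_rotation_inj => //.
- by rewrite size_take_window card_le_part_sum.
- by rewrite size_drop_window card_le_part_sum.
by right; rewrite disjoint_sym disjoint_has.
Qed.

Lemma load_window_rotations g i : 0 < a -> 0 < b ->
  load (window_rotations A N g) i = a * b * (i \in window N g).
Proof.
move=> a_gt0 b_gt0; have W_uniq := window_uniq g.
rewrite load_split_rotations ?take_uniq ?drop_uniq ?size_take_window ?size_drop_window
  ?card_le_part_sum ?(dvdn_mulr _ (dvdnn _)) ?(dvdn_mull _ (dvdnn _)) // mulKn // mulnK //.
by rewrite -(in_take_add_in_drop a i W_uniq) mulnDr (mulnC b a) !(mulnC (a * b)).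
Qed.

Lemma sliding_windows_inj G : all (fun f : placement => injectiveb f) (sliding_windows A N G).
Proof.
apply/allP => f /flattenP[T /mapP[g _ ->]].
exact: (allP (window_rotations_inj g)).
Qed.

Lemma load_sliding_windows G i : 0 < a -> 0 < b ->
  load (sliding_windows A N G) i = a * b * \sum_(0 <= k < r * G) (k %% N == i).
Proof.
move=> a_gt0 b_gt0; rewrite /load big_flatten big_map -sum_blocks big_distrr /=.
have -> : iota 0 G = index_iota 0 G by rewrite /index_iota subn0.
rewrite big_mkord; apply: eq_bigr => g _.
by rewrite -/(load _ i) load_window_rotations // mem_window.
Qed.
End Families.

Lemma perfect_matching_dvdn (sigma : seq nat) n q : all (fun x => 0 < x) sigma ->
  0 < sumn sigma -> sumn sigma %| q -> size sigma <= n ->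
  exists M : {set {set 'I_n * 'I_q}}, is_matching (sumn sigma) sigma M /\ covered M = setT.
Proof.
move=> sigma_pos r_gt0 r_q le_sn.
have n_gt0 : 0 < n by apply: leq_trans le_sn; case: (sigma) r_gt0.
pose T := flatten (nseq (q %/ sumn sigma) (full_rotations sigma (Ordinal n_gt0) (enum 'I_n))).
apply: (@perfect_matching_of_loads _ _ _ sigma_pos T).
  by rewrite all_flatten_nseq ?full_rotations_enum_inj.
by move=> i; rewrite load_flatten_nseq load_full_rotations_enum // divnK.
Qed.

Lemma perfect_matching_no_class (sigma : seq nat) q : all (fun x => 0 < x) sigma ->
  exists M : {set {set 'I_0 * 'I_q}}, is_matching (sumn sigma) sigma M /\ covered M = setT.
Proof. by move=> sigma_pos; apply: (@perfect_matching_of_loads _ _ _ sigma_pos [::]) => // -[]. Qed.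

Lemma perfect_matching_trivial (sigma : seq nat) n q : all (fun x => 0 < x) sigma ->
  (sumn sigma == 1) || (n == 0) ->
  exists M : {set {set 'I_n * 'I_q}}, is_matching (sumn sigma) sigma M /\ covered M = setT.
Proof.
move=> sigma_pos; case: (posnP n) => [n0 _ | n_gt0 /orP[/eqP r1 | //]].
  by subst n; apply: perfect_matching_no_class.
apply: perfect_matching_dvdn; rewrite ?r1 ?dvd1n //.
by apply: leq_trans (size_le_sumn sigma_pos) _; rewrite r1.
Qed.

Lemma deficiency_of_perfect n q r sigma d :
  (exists M : {set {set 'I_n * 'I_q}}, is_matching r sigma M /\ covered M = setT) ->
  exists M : {set {set 'I_n * 'I_q}}, is_matching r sigma M /\ #|~: covered M| <= d.
Proof. by case=> M [M_match M_cov]; exists M; rewrite M_cov setCT cards0. Qed.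

Section Parts.
Variables (sigma : seq nat) (n q : nat) (A : {set 'I_(size sigma)}).
Local Notation s := (size sigma).
Local Notation r := (sumn sigma).
Local Notation a := (part_sum A).
Local Notation b := (part_sum (~: A)).
Local Notation placement := {ffun 'I_s -> 'I_n}.
Hypotheses (sigma_pos : all (fun x => 0 < x) sigma) (a_gt0 : 0 < a) (b_gt0 : 0 < b).

Lemma sumn_gt0 : 0 < r.
Proof. by rewrite -(part_sum_setC A) addn_gt0 a_gt0. Qed.

Definition window_cover (i0 : 'I_n) p al := sliding_windows i0 A (p * r) (p * al).

Lemma window_cover_inj i0 p al : p * r <= n ->
  all (fun f : placement => injectiveb f) (window_cover i0 p al).
Proof.
case: (posnP p) => [-> | p_gt0 le_n]; first by rewrite /window_cover mul0n.
by apply: sliding_windows_inj; rewrite ?leq_pmull ?sumn_gt0 // muln_gt0 p_gt0 sumn_gt0.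
Qed.

Lemma load_window_cover i0 p al i : p * r <= n ->
  load (window_cover i0 p al) i = (i < p * r) * (al * (a * b)).
Proof.
case: (posnP p) => [-> | p_gt0 le_n]; first by rewrite /window_cover mul0n /load big_nil.
rewrite load_sliding_windows ?leq_pmull ?muln_gt0 ?p_gt0 ?sumn_gt0 //.
have -> : r * (p * al) = p * r * al + 0 by rewrite addn0 mulnCA mulnA.
rewrite sum_prefix_mod ?muln_gt0 ?p_gt0 ?sumn_gt0 //.
by case: (i < p * r); rewrite ?ltn0 ?addn0 ?muln0 ?mul1n // mulnC.
Qed.

Lemma matching_window_cover al be : s <= n -> q = al * (a * b) + be * r ->
  exists M : {set {set 'I_n * 'I_q}},
    is_matching r sigma M /\ #|~: covered M| <= n %% r * (al * (a * b)).
Proof.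
move=> le_sn q_eq; have r_gt0 := sumn_gt0.
have n_gt0 : 0 < n by apply: leq_trans le_sn; move: r_gt0; case: (sigma).
pose i0 := Ordinal n_gt0; set p := n %/ r.
have le_pr_n : p * r <= n by rewrite leq_divM.
pose T := flatten (nseq be (full_rotations sigma i0 (enum 'I_n))) ++ window_cover i0 p al.
have loadT i : load T i = be * r + (i < p * r) * (al * (a * b)).
  by rewrite load_cat load_flatten_nseq load_full_rotations_enum // load_window_cover.
apply: (@matching_of_deficiency _ _ _ sigma_pos T).
- by rewrite all_cat all_flatten_nseq ?full_rotations_enum_inj ?window_cover_inj.
- by move=> i; rewrite loadT q_eq; case: (i < _); lia.
rewrite (eq_bigr (fun i : 'I_n => (p * r <= i) * (al * (a * b)))) => [|i _]; last first.
  by rewrite loadT q_eq ltnNge; case: (_ <= _); lia.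
by rewrite -big_distrl /= sum_ord_geq; have := divn_eq n r; lia.
Qed.

Lemma load_sliding_all i0 al G e (i : 'I_n) : r <= n -> e <= n -> r * G = n * al + e ->
  load (sliding_windows i0 A n G) i = a * b * (al + (i < e)).
Proof.
move=> le_rn le_en rG; have n_gt0 := leq_trans sumn_gt0 le_rn.
by rewrite load_sliding_windows // rG sum_prefix_mod // ltn_ord.
Qed.

Lemma matching_sliding_all al be : s + r <= n -> q = al * (a * b) + be * r ->
  a * b * (al + 1) <= q ->
  exists M : {set {set 'I_n * 'I_q}}, is_matching r sigma M /\ #|~: covered M| <= (r - 1) ^ 2.
Proof.
set L := a * b; move=> le_n q_eq le_q; have r_gt0 := sumn_gt0.
have n_gt0 : 0 < n by lia.
pose i0 := Ordinal n_gt0.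
have [G [e [lt_er rG]]] := round_up_mul (n * al) r_gt0.
set bq := (q - L * (al + 1)) %/ r.
have q_div := divn_eq (q - L * (al + 1)) r; have q_mod := ltn_pmod (q - L * (al + 1)) r_gt0.
rewrite (mulnC al) in q_eq.
have le_bq : bq * r <= be * r by rewrite mulnDr muln1 in le_q q_div; lia.
set Xe := [seq i : 'I_n <- enum 'I_n | e <= i].
have mem_Xe i : (i \in Xe) = (e <= i) by rewrite mem_filter mem_enum andbT.
have Xe_uniq : uniq Xe by rewrite filter_uniq ?enum_uniq.
have le_sXe : s <= size Xe by rewrite size_filter_ord_geq; lia.
(* The windows put ab * (al + (i < e)) into class i; the bq rounds over all
   classes and be - bq more over the classes >= e then fill those exactly and
   leave every class < e short by (q - ab * (al + 1)) %% r. *)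
pose T := sliding_windows i0 A n G ++ flatten (nseq bq (full_rotations sigma i0 (enum 'I_n)))
  ++ flatten (nseq (be - bq) (full_rotations sigma i0 Xe)).
have loadT i : load T i = L * (al + (i < e)) + bq * r + (be - bq) * ((e <= i) * r).
  rewrite !load_cat !load_flatten_nseq load_full_rotations_enum ?load_full_rotations //.
    by rewrite (@load_sliding_all i0 al G e i _ _ rG) ?mem_Xe ?addnA //; lia.
  by lia.
apply: (@matching_of_deficiency _ _ _ sigma_pos T).
- rewrite !all_cat !all_flatten_nseq ?full_rotations_enum_inj ?full_rotations_inj ?andbT //.
    by apply: sliding_windows_inj => //; lia.
  by lia.
- move=> i; rewrite loadT; case: (ltnP i e) => _ /=.
    by rewrite addn1 mul0n muln0 addn0; lia.
  by rewrite addn0 mul1n mulnBl; lia.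
apply: (@leq_trans (\sum_(i < n) (i < e) * (r - 1))).
  apply: leq_sum => i _; rewrite loadT; case: (ltnP i e) => _ /=.
    by rewrite addn1 mul0n muln0 addn0; lia.
  by rewrite addn0 mul1n mulnBl; lia.
by rewrite -big_distrl /= sum_ord_ltn expnS expn1 leq_mul //; lia.
Qed.

Lemma matching_lcm_bound : coprime (a * b) r -> a * b * (r - 1) <= q -> s <= n ->
  exists M : {set {set 'I_n * 'I_q}},
    is_matching r sigma M /\ #|~: covered M| <= a * b * (r - 1) ^ 2.
Proof.
move=> co_abr le_q le_sn; have r_gt0 := sumn_gt0.
have [|al [be [lt_al q_eq]]] := @frobenius_representation _ _ q r_gt0 co_abr.
  by apply: leq_trans le_q; rewrite leq_mul2r leq_subr orbT.
have [M [M_match M_def]] := matching_window_cover le_sn q_eq.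
exists M; split => //; apply: (leq_trans M_def).
have le_nr : n %% r <= r - 1 by have := ltn_pmod n r_gt0; lia.
have le_al : al <= r - 1 by lia.
apply: (leq_trans (leq_mul le_nr (leq_mul le_al (leqnn (a * b))))).
by rewrite mulnA mulnC expnS expn1.
Qed.

Lemma perfect_matching_dvdn_classes : coprime (a * b) r -> (a * b - 1) * (r - 1) <= q ->
  r %| n -> 0 < n ->
  exists M : {set {set 'I_n * 'I_q}}, is_matching r sigma M /\ covered M = setT.
Proof.
move=> co_abr le_q r_n n_gt0; have r_gt0 := sumn_gt0.
have [al [be [lt_al q_eq]]] := frobenius_representation r_gt0 co_abr le_q.
have le_sn : s <= n := leq_trans (size_le_sumn sigma_pos) (dvdn_leq n_gt0 r_n).
have [M [M_match M_def]] := matching_window_cover le_sn q_eq.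
by exists M; split => //; apply: setC_card_leq0; rewrite (eqP r_n) mul0n in M_def.
Qed.

Lemma matching_small_deficiency : coprime (a * b) r -> a * b * (r ^ 2 - 1) <= q -> s + r <= n ->
  exists M : {set {set 'I_n * 'I_q}}, is_matching r sigma M /\ #|~: covered M| <= (r - 1) ^ 2.
Proof.
move=> co_abr le_q le_n; have r_gt0 := sumn_gt0.
have le_r_sq : r <= r ^ 2 - 1.
  have le_2r : 2 <= r by rewrite -(part_sum_setC A); lia.
  by rewrite expnS expn1; have := leq_mul le_2r (leqnn r); lia.
have [|al [be [lt_al q_eq]]] := @frobenius_representation _ _ q r_gt0 co_abr.
  by apply: leq_trans le_q; apply: leq_mul; [apply: leq_subr | apply: leq_trans le_r_sq; lia].
apply: matching_sliding_all le_n q_eq _; apply: leq_trans le_q.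
by rewrite leq_mul2l addn1 (leq_trans lt_al le_r_sq) orbT.
Qed.
End Parts.

Theorem theorem3p10 (r n q : nat) (sigma : seq nat)
    (A : {set 'I_(size sigma)}) :
  all (fun x => 0 < x) sigma -> sumn sigma = r ->
  r_good r sigma ->
  gcdn (part_sum A) (part_sum (~: A)) = 1 ->
  gcdn (part_sum A) r = 1 ->
  gcdn (part_sum (~: A)) r = 1 ->
  let s := size sigma in
  let L := lcmn (part_sum A) (part_sum (~: A)) in
  [/\ ((r %| q) /\ s <= n \/ (r %| n) /\ (L - 1) * (r - 1) <= q) ->
        exists M : {set {set 'I_n * 'I_q}},
          is_matching r sigma M /\ covered M = setT,
      L * (r - 1) <= q -> s <= n ->
        exists M : {set {set 'I_n * 'I_q}},
          is_matching r sigma M /\ #|~: covered M| <= L * (r - 1) ^ 2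
    & L * (r ^ 2 - 1) <= q -> 3 <= s -> s + r <= n ->
        exists M : {set {set 'I_n * 'I_q}},
          is_matching r sigma M /\ #|~: covered M| <= (r - 1) ^ 2].
Proof.
move=> sigma_pos r_def _ gAB gAr gBr s L; subst r.
set r := sumn sigma in gAr gBr *; set a := part_sum A in gAB gAr L *.
set b := part_sum (~: A) in gAB gBr L *; have ab_r : a + b = r := part_sum_setC A.
have [r1_or_n0 | /norP[/eqP r_ne1 /eqP n_ne0]] := boolP ((r == 1) || (n == 0)).
  have perfect := perfect_matching_trivial q sigma_pos r1_or_n0.
  by split=> *; try apply: deficiency_of_perfect.
have a_gt0 : 0 < a by case: (posnP a) gAr => // ->; rewrite gcd0n.
have b_gt0 : 0 < b by case: (posnP b) gBr => // ->; rewrite gcd0n.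
have -> : L = a * b by rewrite /L -(muln_lcm_gcd a b) gAB muln1.
have co_abr : coprime (a * b) r by rewrite coprimeMl /coprime gAr gBr.
split.
- case=> [[r_q le_sn] | [r_n le_q]].
    by apply: perfect_matching_dvdn; rewrite // -/r -ab_r addn_gt0 a_gt0.
  by apply: (perfect_matching_dvdn_classes (A := A)) => //; rewrite lt0n; apply/eqP.
- by move=> le_q le_sn; apply: (matching_lcm_bound (A := A)).
- by move=> le_q _ le_n; apply: (matching_small_deficiency (A := A)).
Qed.
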